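(* Let $A$ and $B$ be bounded lattices and let $(\alpha,\beta)$ be a retractable Galois connection between $A$ and $B$ such that $\beta(0)=0$. (i) If $b,b'\in B$ are such that $\beta(b)$ is essential in $[0,\beta(b')]$, then $b\wedge b'$ is essential in $[0,b']$. (ii) If $a,a'\in A$ are such that $a$ is essential in $[0,a']$ and $a'$ is a Galois element, then $\alpha(a)$ is essential in $[0,\alpha(a')]$. Assume in addition that either (E) $(\alpha,\beta)$ is essential, or (C) $(\alpha,\beta)$ is cyclically essential and $A$ is cyclically generated. Then: (iii) If $b,b'\in B$ are such that $b$ is essential in $[0,b']$, then $\beta(b)$ is essential in $[0,\beta(b')]$. (iv) If $a,a'\in A$ (where, in case (C), $a$ is additionally assumed to be cyclic) are such that $\alpha(a)$ is essential in $[0,\alpha(a')]$, then $a\wedge a'$ is essential in $[0,a']$.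
   Context: A bounded lattice $(A,\wedge,\vee,0,1)$ has least element $0$ and greatest element $1$, with $0\neq1$; $[a,a']=\{x: a\le x\le a'\}$. A Galois connection between lattices $A$ and $B$ is a pair of order-preserving maps $\alpha:A\to B$, $\beta:B\to A$ such that $\alpha(a)\le b$ iff $a\le\beta(b)$ for all $a\in A$, $b\in B$. An element $a\in A$ is Galois if $\beta\alpha(a)=a$. For $a\le c$, $a$ is essential in $[0,c]$ if for every $x\le c$, $a\wedge x=0$ implies $x=0$. An element $a$ is cyclic if $[0,a]$ is a distributive lattice satisfying the ascending chain condition; $A$ is cyclically generated if every element of $A$ is a join of cyclic elements. The Galois connection is essential (resp. cyclically essential) if for every $a\in A$ (resp. every cyclic $a\in A$), $a$ is essential in $[0,\beta\alpha(a)]$; it is retractable if for every $b\in B$, $\alpha\beta(b)$ is essential in $[0,b]$. *)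

From mathcomp Require Import all_boot all_order.
Set Implicit Arguments. Unset Strict Implicit. Unset Printing Implicit Defensive.
Import Order.TTheory.
Local Open Scope order_scope.

Definition galois_connection {dA dB} {A : tbLatticeType dA} {B : tbLatticeType dB}
  (alpha : A -> B) (beta : B -> A) : Prop :=
  [/\ {homo alpha : x y / x <= y}, {homo beta : x y / x <= y} &
      forall (a : A) (b : B), (alpha a <= b) <-> (a <= beta b)].

Definition galois_elt {dA dB} {A : tbLatticeType dA} {B : tbLatticeType dB}
  (alpha : A -> B) (beta : B -> A) (a : A) : Prop := beta (alpha a) = a.

Definition essential_in {d} {T : tbLatticeType d} (a c : T) : Prop :=
  a <= c /\ forall x : T, x <= c -> a `&` x = \bot -> x = \bot.

Definition distrib_below {d} {T : tbLatticeType d} (a : T) : Prop :=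
  forall x y z : T, x <= a -> y <= a -> z <= a ->
    x `&` (y `|` z) = (x `&` y) `|` (x `&` z).

Definition acc_below {d} {T : tbLatticeType d} (a : T) : Prop :=
  ~ exists f : nat -> T, (forall n, f n <= a) /\ (forall n, f n < f n.+1).

Definition cyclic {d} {T : tbLatticeType d} (a : T) : Prop :=
  distrib_below a /\ acc_below a.

Definition is_join_of {d} {T : tbLatticeType d} (S : T -> Prop) (a : T) : Prop :=
  (forall x, S x -> x <= a) /\ (forall u, (forall x, S x -> x <= u) -> a <= u).

Definition cyclically_generated {d} (T : tbLatticeType d) : Prop :=
  forall a : T, exists S : T -> Prop, (forall x, S x -> cyclic x) /\ is_join_of S a.

Definition essential_gc {dA dB} {A : tbLatticeType dA} {B : tbLatticeType dB}
  (alpha : A -> B) (beta : B -> A) : Prop :=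
  forall a : A, essential_in a (beta (alpha a)).

Definition cyclically_essential_gc {dA dB} {A : tbLatticeType dA} {B : tbLatticeType dB}
  (alpha : A -> B) (beta : B -> A) : Prop :=
  forall a : A, cyclic a -> essential_in a (beta (alpha a)).

Definition retractable_gc {dA dB} {A : tbLatticeType dA} {B : tbLatticeType dB}
  (alpha : A -> B) (beta : B -> A) : Prop :=
  forall b : B, essential_in (alpha (beta b)) b.

(* The right adjoint beta preserves meets, and retractability makes beta
   reflect \bot.  For (iii) and (iv) one tests essentiality against an element
   c of A that is essential in its Galois closure beta (alpha c): disjointness
   is pushed from c to beta (alpha c), transported through beta to B, where the
   hypothesis applies, and pulled back via alpha c = \bot -> c = \bot.  Such
   test elements are all of A in case (E), and the cyclic elements in case (C),
   where every element of A is a join of them. *)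

From mathcomp Require Import all_boot all_order.
Import Order.TTheory.
Local Open Scope order_scope.
Set Implicit Arguments. Unset Strict Implicit.

Lemma lex0_eq {d} {T : tbLatticeType d} (x : T) : x <= \bot -> x = \bot.
Proof. by move=> x0; apply/eqP; rewrite -lex0. Qed.

Lemma essential_in_meet {d} {T : tbLatticeType d} (a a' : T) :
  (forall x, x <= a' -> a `&` x = \bot -> x = \bot) -> essential_in (a `&` a') a'.
Proof.
move=> ess; split=> [|x xa']; first by rewrite leIr.
by rewrite -meetA (meet_idPr xa'); apply: ess.
Qed.

Definition bot_detecting {d} {T : tbLatticeType d} (P : T -> Prop) : Prop :=
  forall x : T, (forall c, P c -> c <= x -> c = \bot) -> x = \bot.

Lemma bot_detecting_all {d} {T : tbLatticeType d} : bot_detecting (fun _ : T => True).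
Proof. by move=> x; apply. Qed.

Lemma cyclically_generated_bot_detecting {d} {T : tbLatticeType d} :
  cyclically_generated T -> bot_detecting (@cyclic d T).
Proof.
move=> cg x x0; have [S [cycS [ubS lubS]]] := cg x.
by apply: lex0_eq; apply: lubS => c Sc; rewrite (x0 c (cycS c Sc) (ubS c Sc)).
Qed.

Section GaloisConnection.
Variables (dA dB : Order.disp_t) (A : tbLatticeType dA) (B : tbLatticeType dB).
Variables (alpha : A -> B) (beta : B -> A).
Hypothesis gc : galois_connection alpha beta.

Lemma gc_adjoint a b : (alpha a <= b) = (a <= beta b).
Proof. by case: gc => _ _ adj; apply/idP/idP => /adj. Qed.

Lemma gc_alpha_mono : {homo alpha : x y / x <= y}.
Proof. by case: gc. Qed.

Lemma gc_beta_mono : {homo beta : x y / x <= y}.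
Proof. by case: gc. Qed.

Lemma gc_unit a : a <= beta (alpha a).
Proof. by rewrite -gc_adjoint. Qed.

Lemma gc_counit b : alpha (beta b) <= b.
Proof. by rewrite gc_adjoint. Qed.

Lemma gc_alpha0 : alpha \bot = \bot.
Proof. by apply: lex0_eq; rewrite gc_adjoint le0x. Qed.

Lemma gc_betaI b b' : beta (b `&` b') = beta b `&` beta b'.
Proof.
apply/le_anti/andP; split.
  by rewrite lexI gc_beta_mono ?leIl // gc_beta_mono ?leIr.
rewrite -gc_adjoint lexI.
rewrite (le_trans _ (gc_counit b)) ?(le_trans _ (gc_counit b')) //.
  by rewrite gc_alpha_mono ?leIr.
by rewrite gc_alpha_mono ?leIl.
Qed.

Hypothesis ret : retractable_gc alpha beta.
Hypothesis beta0 : beta \bot = \bot.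

Lemma beta_eq0 b : beta b = \bot -> b = \bot.
Proof.
move=> b0; case: (ret b) => _; apply=> //.
by apply: lex0_eq; rewrite b0 gc_alpha0 leIl.
Qed.

Lemma alpha_eq0 a : alpha a = \bot -> a = \bot.
Proof. by move=> a0; apply: lex0_eq; rewrite -beta0 -a0 gc_unit. Qed.

Lemma essential_meet_of_beta b b' :
  essential_in (beta b) (beta b') -> essential_in (b `&` b') b'.
Proof.
case=> _ ess; apply: essential_in_meet => x xb' bx0.
apply: beta_eq0; apply: ess; first exact: gc_beta_mono.
by rewrite -gc_betaI bx0.
Qed.

Lemma essential_alpha a a' :
  essential_in a a' -> galois_elt alpha beta a' -> essential_in (alpha a) (alpha a').
Proof.
case=> aa' ess closed_a'; split=> [|y ya' ay0]; first exact: gc_alpha_mono.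
apply: beta_eq0; apply: ess; first by rewrite -closed_a' gc_beta_mono.
by apply: lex0_eq; rewrite -beta0 -ay0 gc_betaI leI2 ?gc_unit.
Qed.

Lemma essential_beta_test b b' c :
  essential_in b b' -> essential_in c (beta (alpha c)) ->
  c <= beta b' -> beta b `&` c = \bot -> c = \bot.
Proof.
move=> [_ ess_b] [_ ess_c] cb' bc0; apply: alpha_eq0.
apply: ess_b; first by rewrite gc_adjoint.
apply: beta_eq0; apply: ess_c; first by rewrite gc_beta_mono ?leIr.
by apply: lex0_eq; rewrite -bc0 gc_betaI meetC leI2 ?leIl.
Qed.

Lemma essential_meet_test a a' c :
  essential_in (alpha a) (alpha a') -> essential_in a (beta (alpha a)) ->
  essential_in c (beta (alpha c)) -> c <= a' -> a `&` c = \bot -> c = \bot.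
Proof.
move=> [_ ess_alpha] [_ ess_a] [_ ess_c] ca' ac0.
have a_closure_c0 : a `&` beta (alpha c) = \bot.
  apply: ess_c; first exact: leIr.
  by rewrite meetA (meetC c) ac0 meet0x.
apply: alpha_eq0; apply: ess_alpha; first exact: gc_alpha_mono.
apply: beta_eq0; apply: ess_a; first by rewrite gc_beta_mono ?leIl.
by rewrite gc_betaI meetA (meet_idPl (gc_unit a)).
Qed.

Variable P : A -> Prop.
Hypothesis P_essential : forall c, P c -> essential_in c (beta (alpha c)).
Hypothesis P_bot_detecting : bot_detecting P.

Lemma essential_beta b b' : essential_in b b' -> essential_in (beta b) (beta b').
Proof.
move=> ess_b; split=> [|x xb' bx0]; first by case: ess_b => bb' _; apply: gc_beta_mono.
apply: P_bot_detecting => c Pc cx.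
apply: (essential_beta_test ess_b (P_essential Pc)); first exact: le_trans xb'.
by apply: lex0_eq; rewrite -bx0 leI2.
Qed.

Lemma essential_meet_of_alpha a a' :
  essential_in a (beta (alpha a)) -> essential_in (alpha a) (alpha a') ->
  essential_in (a `&` a') a'.
Proof.
move=> ess_a ess_alpha; apply: essential_in_meet => x xa' ax0.
apply: P_bot_detecting => c Pc cx.
apply: (essential_meet_test ess_alpha ess_a (P_essential Pc)); first exact: le_trans xa'.
by apply: lex0_eq; rewrite -ax0 leI2.
Qed.

End GaloisConnection.

Theorem lemma2p7 (dA dB : Order.disp_t) (A : tbLatticeType dA) (B : tbLatticeType dB)
  (alpha : A -> B) (beta : B -> A) :
  (\bot : A) != \top -> (\bot : B) != \top ->
  galois_connection alpha beta -> retractable_gc alpha beta ->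
  beta \bot = \bot ->
  (* (i) *)
  (forall b b' : B, essential_in (beta b) (beta b') -> essential_in (b `&` b') b') /\
  (* (ii) *)
  (forall a a' : A, essential_in a a' -> galois_elt alpha beta a' ->
     essential_in (alpha a) (alpha a')) /\
  (* case (E): (iii) and (iv) *)
  (essential_gc alpha beta ->
     (forall b b' : B, essential_in b b' -> essential_in (beta b) (beta b')) /\
     (forall a a' : A, essential_in (alpha a) (alpha a') -> essential_in (a `&` a') a')) /\
  (* case (C): (iii) and (iv) with a cyclic *)
  (cyclically_essential_gc alpha beta -> cyclically_generated A ->
     (forall b b' : B, essential_in b b' -> essential_in (beta b) (beta b')) /\
     (forall a a' : A, cyclic a -> essential_in (alpha a) (alpha a') ->
        essential_in (a `&` a') a')).
Proof.
move=> _ _ gc ret beta0.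
split; first exact: (essential_meet_of_beta gc ret).
split; first exact: (essential_alpha gc ret beta0).
split=> [ess | cess /cyclically_generated_bot_detecting cyc_det].
  have ess_all : forall c, True -> essential_in c (beta (alpha c)) by move=> c _; apply: ess.
  split=> [b b' | a a'].
    exact: (essential_beta gc ret beta0 ess_all bot_detecting_all).
  exact: (essential_meet_of_alpha gc ret beta0 ess_all bot_detecting_all (ess a)).
split=> [b b' | a a' cyc_a].
  exact: (essential_beta gc ret beta0 cess cyc_det).
exact: (essential_meet_of_alpha gc ret beta0 cess cyc_det (cess a cyc_a)).
Qed.
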